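(* Consider progressive filtering with an ensemble of $M$ selection strategies $s_1,\dots,s_M$, $J$ batches per strategy per round, sampling ratio $\alpha\in(0,1)$ and batch size $b$. Let $r\ge 1$ be a round, let $\mathbf{x}\in\mathcal{C}_{r-1}$, and for each $m\in\{1,\dots,M\}$ let $p_{m,r}(\mathbf{x})$ be the probability that strategy $s_m$ includes $\mathbf{x}$ in a selected batch during round $r$, given that $\mathbf{x}$ is present in the random subsample. Then the probability that $\mathbf{x}$ survives round $r$, $P_r(\mathbf{x})=\Pr(\mathbf{x}\in\mathcal{C}_r\mid \mathbf{x}\in\mathcal{C}_{r-1})$, satisfies $$P_r(\mathbf{x})\ \ge\ 1-\Big(1-\alpha\cdot\max_{m\in\{1,\dots,M\}} p_{m,r}(\mathbf{x})\Big)^J.$$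
   Context: Setting (pool-based batch active learning). $\mathcal{U}_t$ is a finite unlabeled pool. A selection strategy $s$ is a (possibly randomized) map taking a finite set $\mathcal{P}$ of instances and a batch size $b$ to a subset $s(\mathcal{P},b)\subseteq\mathcal{P}$ of size $b$. Progressive filtering with strategies $s_1,\dots,s_M$, number of rounds $R$, number of batches per strategy $J$, and sampling ratio $\alpha\in(0,1)$ produces pools $\mathcal{C}_0=\mathcal{U}_t\supseteq \mathcal{C}_1\supseteq\dots\supseteq\mathcal{C}_R$ by $$\mathcal{C}_r=\bigcup_{m=1}^M\bigcup_{j=1}^J s_m\big(\mathrm{SubSample}(\mathcal{C}_{r-1},\alpha|\mathcal{C}_{r-1}|),\,b\big),$$ where each $\mathrm{SubSample}(\mathcal{C},n)$ draws $n$ instances of $\mathcal{C}$ uniformly at random without replacement, a fresh independent subsample being drawn for each of the $M\cdot J$ pairs $(m,j)$ in each round, so that each fixed instance of $\mathcal{C}_{r-1}$ lies in a given subsample with probability $\alpha$, and the $M\cdot J$ draws of a round are independent. *)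

From mathcomp Require Import all_boot all_order all_algebra.
Set Implicit Arguments. Unset Strict Implicit. Unset Printing Implicit Defensive.
Import Order.TTheory GRing.Theory Num.Theory.
Local Open Scope ring_scope.

(* pmf of SubSample(C, n): a uniformly random n-subset of C
   (n draws uniformly without replacement, viewed as a set). *)
Definition subsample_pmf (R : realFieldType) (T : finType)
  (C : {set T}) (n : nat) (S : {set T}) : R :=
  if (S \subset C) && (#|S| == n) then ('C(#|C|, n)%:R)^-1 else 0.

(* A randomized selection strategy: s P b is the pmf of the output s(P,b). *)
Definition strategy (R : realFieldType) (T : finType) :=
  {set T} -> nat -> {set T} -> R.

Definition is_strategy (R : realFieldType) (T : finType)
  (s : strategy R T) (b : nat) : Prop :=
  forall P : {set T}, (b <= #|P|)%N ->
    (forall B, 0 <= s P b B) /\ (\sum_(B : {set T}) s P b B = 1) /\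
    (forall B, s P b B != 0 -> (B \subset P) && (#|B| == b)).

Definition pair_pmf (R : realFieldType) (T : finType) (C : {set T}) (n : nat)
  (s : strategy R T) (b : nat) (SB : {set T} * {set T}) : R :=
  subsample_pmf R C n SB.1 * s SB.1 b SB.2.

(* p_{m,r}(x) = Pr(x \in s_m(S,b) | x \in S), S = SubSample(C, n) *)
Definition incl_prob (R : realFieldType) (T : finType) (C : {set T}) (n : nat)
  (s : strategy R T) (b : nat) (x : T) : R :=
  (\sum_(SB : {set T} * {set T})
      pair_pmf C n s b SB * ((x \in SB.1) && (x \in SB.2))%:R)
  / (\sum_(S : {set T}) subsample_pmf R C n S * (x \in S)%:R).

(* One round of progressive filtering from pool C = C_{r-1}: for each of the
   M*J pairs (m,j) an independent subsample S_{m,j} and batch B_{m,j} ~ s_m(S_{m,j},b);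
   C_r = \bigcup B_{m,j}.  survival_prob = Pr(x \in C_r). *)
Definition survival_prob (R : realFieldType) (T : finType) (C : {set T})
  (n : nat) (M J : nat) (s : 'I_M -> strategy R T) (b : nat) (x : T) : R :=
  \sum_(w : {ffun 'I_M * 'I_J -> {set T} * {set T}})
     (\prod_(i : 'I_M * 'I_J) pair_pmf C n (s i.1) b (w i))
     * (x \in \bigcup_(i : 'I_M * 'I_J) (w i).2)%:R.

(** The M J pairs (m, j) of a round draw independent pairs (S, B) of a subsample and a
    batch, and x survives unless it misses every batch. Since B is a subset of S and x lies
    in a uniform n-subset of C with probability n / |C| = alpha, x lands in the batch of s_m
    with probability alpha p_m. Hence x survives with probability
    1 - prod_(m,j) (1 - alpha p_m); all factors lie in [0, 1], so keeping only the J
    factors of a strategy attaining max_m p_m bounds the product. *)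
From mathcomp Require Import all_boot all_order all_algebra.

Set Implicit Arguments.
Unset Strict Implicit.
Unset Printing Implicit Defensive.

Import Order.TTheory GRing.Theory Num.Theory.
Local Open Scope ring_scope.

Lemma card_draws_mem (T : finType) (C : {set T}) (x : T) (k : nat) :
  x \in C ->
  #|[set S : {set T} | (S \subset C) && (#|S| == k.+1) && (x \in S)]| =
  'C(#|C|.-1, k).
Proof.
move=> xC.
have -> : [set S : {set T} | (S \subset C) && (#|S| == k.+1) && (x \in S)] =
          [set x |: S | S in [set S : {set T} | S \subset C :\ x & #|S| == k]].
  apply/setP=> S; rewrite !inE; apply/idP/imsetP.
  - move=> /andP[/andP[sSC /eqP cardS] xS]; exists (S :\ x); last by rewrite setD1K.
    rewrite inE setSD //=.
    by move: cardS; rewrite (cardsD1 x S) xS add1n => -[->].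
  - case=> A; rewrite inE => /andP[sA /eqP cardA] ->.
    have xA : x \notin A by apply/negP=> /(subsetP sA); rewrite !inE eqxx.
    rewrite setU11 andbT cardsU1 xA cardA eqxx andbT subUset sub1set xC /=.
    exact: subset_trans sA (subsetDl _ _).
rewrite card_in_imset; first by rewrite cards_draws (cardsD1 x C) xC.
move=> A B; rewrite !inE => /andP[sA _] /andP[sB _] eqAB.
have xA : x \notin A by apply/negP=> /(subsetP sA); rewrite !inE eqxx.
have xB : x \notin B by apply/negP=> /(subsetP sB); rewrite !inE eqxx.
by rewrite -(setU1K xA) -(setU1K xB) eqAB.
Qed.

Section Subsample.

Variables (R : realFieldType) (T : finType) (C : {set T}) (n : nat).

Lemma subsample_pmf_ge0 S : 0 <= subsample_pmf R C n S.
Proof. by rewrite /subsample_pmf; case: ifP; rewrite ?invr_ge0 ?ler0n. Qed.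

Lemma sum_subsample_pmf : (n <= #|C|)%N -> \sum_S subsample_pmf R C n S = 1.
Proof.
move=> nC; rewrite /subsample_pmf -big_mkcond sumr_const /=.
have -> : #|[pred S : {set T} | (S \subset C) && (#|S| == n)]| = 'C(#|C|, n).
  by rewrite -cards_draws; apply: eq_card => S; rewrite inE.
by rewrite -[_ *+ 'C(_, _)]mulr_natr mulVf // pnatr_eq0 -lt0n bin_gt0.
Qed.

Lemma subsample_mem_prob x :
  x \in C -> (0 < n)%N -> (n <= #|C|)%N ->
  \sum_S subsample_pmf R C n S * (x \in S)%:R = n%:R / #|C|%:R.
Proof.
case: n => [//|k] xC _ kC.
have -> : \sum_S subsample_pmf R C k.+1 S * (x \in S)%:R =
          \sum_(S : {set T}) (if (S \subset C) && (#|S| == k.+1) && (x \in S)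
                  then ('C(#|C|, k.+1)%:R)^-1 else 0).
  by apply: eq_bigr => S _; rewrite /subsample_pmf; case: ifP; case: (x \in S);
    rewrite ?andbT ?andbF ?mulr1 ?mulr0 // => ->.
rewrite -big_mkcond sumr_const /=.
have -> : #|[pred S : {set T} | (S \subset C) && (#|S| == k.+1) && (x \in S)]| =
          'C(#|C|.-1, k).
  by rewrite -(card_draws_mem k xC); apply: eq_card => S; rewrite inE.
have C_neq0 : #|C|%:R != 0 :> R by rewrite pnatr_eq0 -lt0n (leq_trans _ kC).
have bin_neq0 : 'C(#|C|, k.+1)%:R != 0 :> R by rewrite pnatr_eq0 -lt0n bin_gt0.
rewrite -[_ *+ 'C(_, _)]mulr_natr; apply: (canRL (mulfK C_neq0)).
by rewrite mulrAC -mulrA -natrM mul_bin_diag natrM mulrA mulrAC mulVf // mul1r.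
Qed.

End Subsample.

Lemma sum_event_compl (R : pzRingType) (A : finType) (f : A -> R) (E : pred A) :
  \sum_a f a = 1 -> 1 - \sum_a f a * (E a)%:R = \sum_a f a * (~~ E a)%:R.
Proof.
move=> f_sum1; rewrite -{1}f_sum1 -sumrB; apply: eq_bigr => a _.
by case: (E a); rewrite ?mulr1 ?mulr0 ?subr0 ?subrr.
Qed.

Lemma natr_exists (R : comPzRingType) (I : finType) (P : pred I) :
  [exists i, P i]%:R = 1 - \prod_i (~~ P i)%:R :> R.
Proof.
case: existsP => [[i Pi] | noP]; first by rewrite (bigD1 i) //= Pi mul0r subr0.
by rewrite big1 ?subrr // => i _; case: (boolP (P i)) => // Pi; case: noP; exists i.
Qed.

Lemma prob_exists_indep (R : comPzRingType) (I A : finType)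
    (f : I -> A -> R) (E : I -> pred A) :
  (forall i, \sum_a f i a = 1) ->
  \sum_(w : {ffun I -> A}) (\prod_i f i (w i)) * [exists i, E i (w i)]%:R =
  1 - \prod_i (1 - \sum_a f i a * (E i a)%:R).
Proof.
move=> f_sum1.
rewrite (eq_bigr (fun w : {ffun I -> A} =>
    \prod_i f i (w i) - \prod_i (f i (w i) * (~~ E i (w i))%:R))); last first.
  by move=> w _; rewrite natr_exists mulrBr mulr1 -big_split.
rewrite sumrB -(bigA_distr_bigA f).
rewrite -(bigA_distr_bigA (fun i a => f i a * (~~ E i a)%:R)).
rewrite big1 => [|i _]; last exact: f_sum1.
by congr (_ - _); apply: eq_bigr => i _; rewrite sum_event_compl.
Qed.

Section RealEvents.

Variables (R : numDomainType) (A : finType) (f : A -> R).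
Hypotheses (f_ge0 : forall a, 0 <= f a) (f_sum1 : \sum_a f a = 1).

Lemma sum_event_ge0 (E : pred A) : 0 <= \sum_a f a * (E a)%:R.
Proof. by apply: sumr_ge0 => a _; rewrite mulr_ge0. Qed.

Lemma sum_event_compl_itv (E : pred A) :
  0 <= 1 - \sum_a f a * (E a)%:R <= 1.
Proof.
by rewrite sum_event_compl // sum_event_ge0 -sum_event_compl // gerBl sum_event_ge0.
Qed.

End RealEvents.

Definition batch_prob (R : realFieldType) (T : finType) (C : {set T}) (n : nat)
    (s : strategy R T) (b : nat) (x : T) : R :=
  \sum_SB pair_pmf C n s b SB * (x \in SB.2)%:R.

Section Batch.

Variables (R : realFieldType) (T : finType) (C : {set T}) (n : nat).
Variables (s : strategy R T) (b : nat).
Hypotheses (s_strategy : is_strategy s b) (b_le_n : (b <= n)%N).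

Let s_on_subsample S :
  subsample_pmf R C n S != 0 ->
  [/\ forall B, 0 <= s S b B, \sum_B s S b B = 1 &
      forall B, s S b B != 0 -> B \subset S].
Proof.
rewrite /subsample_pmf; case: ifP => [/andP[_ /eqP cardS] _ | _]; last by rewrite eqxx.
have [s_ge0 [s_sum1 s_supp]] := s_strategy (eq_ind_r (leq b) b_le_n cardS).
by split=> // B /s_supp /andP[].
Qed.

Lemma pair_pmf_ge0 SB : 0 <= pair_pmf C n s b SB.
Proof.
rewrite /pair_pmf.
have [->|/s_on_subsample[s_ge0 _ _]] := eqVneq (subsample_pmf R C n SB.1) 0.
  by rewrite mul0r.
by rewrite mulr_ge0 ?subsample_pmf_ge0.
Qed.

Lemma pair_pmf_sub SB : pair_pmf C n s b SB != 0 -> SB.2 \subset SB.1.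
Proof.
rewrite /pair_pmf mulf_eq0 negb_or => /andP[/s_on_subsample[_ _ s_supp]].
exact: s_supp.
Qed.

Lemma sum_pair_pmf : (n <= #|C|)%N -> \sum_SB pair_pmf C n s b SB = 1.
Proof.
move=> nC; rewrite -(sum_subsample_pmf R nC).
have -> : \sum_SB pair_pmf C n s b SB = \sum_S \sum_B pair_pmf C n s b (S, B).
  by rewrite pair_bigA; apply: eq_bigr => -[].
apply: eq_bigr => S _; rewrite /pair_pmf /= -mulr_sumr.
have [->|/s_on_subsample[_ -> _]] := eqVneq (subsample_pmf R C n S) 0.
  by rewrite mul0r.
by rewrite mulr1.
Qed.

Lemma incl_prob_ge0 x : 0 <= incl_prob C n s b x.
Proof.
rewrite /incl_prob divr_ge0 //; apply: sumr_ge0 => ? _.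
  by rewrite mulr_ge0 ?pair_pmf_ge0.
by rewrite mulr_ge0 ?subsample_pmf_ge0.
Qed.

Lemma batch_probE x :
  x \in C -> (0 < n)%N -> (n <= #|C|)%N ->
  batch_prob C n s b x = n%:R / #|C|%:R * incl_prob C n s b x.
Proof.
move=> xC n_gt0 nC.
have den_neq0 : n%:R / #|C|%:R != 0 :> R.
  by rewrite mulf_neq0 ?invr_eq0 ?pnatr_eq0 -?lt0n // (leq_trans n_gt0).
rewrite /incl_prob subsample_mem_prob // mulrC divfK //.
apply: eq_bigr => SB _.
have [->|/pair_pmf_sub sub] := eqVneq (pair_pmf C n s b SB) 0; first by rewrite !mul0r.
by case xB: (x \in SB.2); rewrite ?andbF // (subsetP sub x xB).
Qed.

End Batch.

Lemma survival_probE (R : realFieldType) (T : finType) (C : {set T}) (n M J : nat)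
    (s : 'I_M -> strategy R T) (b : nat) (x : T) :
  (forall m, \sum_SB pair_pmf C n (s m) b SB = 1) ->
  survival_prob C n J s b x =
  1 - \prod_(i : 'I_M * 'I_J) (1 - batch_prob C n (s i.1) b x).
Proof.
move=> pair_sum1.
rewrite -(prob_exists_indep (f := fun i => pair_pmf C n (s i.1) b)
                            (fun i SB => x \in SB.2)) //.
apply: eq_bigr => w _.
by congr (_ * (nat_of_bool _)%:R); apply/bigcupP/existsP => [[i _] | [i]]; exists i.
Qed.

Lemma prodr_le_factor (R : numDomainType) (I : finType) (F : I -> R) (i0 : I) :
  (forall i, 0 <= F i <= 1) -> \prod_i F i <= F i0.
Proof.
move=> F_itv; rewrite (bigD1 i0) //= ler_piMr ?(andP (F_itv i0)).1 //.
by apply: prodr_ile1 => i _; apply: F_itv.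
Qed.

Lemma prod_pair_le_expr (R : numDomainType) (M J : nat) (q : 'I_M -> R) (m0 : 'I_M) :
  (forall m, 0 <= q m <= 1) -> \prod_(i : 'I_M * 'I_J) q i.1 <= q m0 ^+ J.
Proof.
move=> q_itv; rewrite -(pair_bigA _ (fun m (_ : 'I_J) => q m)) /=.
under eq_bigr do rewrite prodr_const card_ord.
apply: (prodr_le_factor (F := fun m => q m ^+ J)) => m.
by have /andP[q_ge0 q_le1] := q_itv m; rewrite exprn_ge0 ?exprn_ile1.
Qed.

Theorem theorem1 (R : realFieldType) (T : finType) (C : {set T}) (x : T)
  (M J b n : nat) (alpha : R) (s : 'I_M -> strategy R T) :
  x \in C -> (0 < M)%N -> (0 < J)%N ->
  0 < alpha -> alpha < 1 ->
  alpha * #|C|%:R = n%:R -> (b <= n)%N ->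
  (forall m, is_strategy (s m) b) ->
  1 - (1 - alpha * \big[Num.max/0]_(m < M) incl_prob C n (s m) b x) ^+ J
    <= survival_prob C n J s b x.
Proof.
move=> xC M_gt0 _ alpha_gt0 alpha_lt1 alphaC b_le_n s_strategy.
have C_gt0 : 0 < #|C|%:R :> R by rewrite ltr0n; apply/card_gt0P; exists x.
have alphaE : alpha = n%:R / #|C|%:R by rewrite -alphaC mulfK ?gt_eqF.
have n_gt0 : (0 < n)%N by rewrite -(ltr_nat R) -alphaC mulr_gt0.
have nC : (n <= #|C|)%N by rewrite -(ler_nat R) -alphaC ler_piMl ?ltW.
have pair_sum1 m := sum_pair_pmf (s_strategy m) b_le_n nC.
have [m0 _ ->] := eq_bigmax (Ordinal M_gt0) predT (fun m => incl_prob C n (s m) b x)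
  isT (fun m _ => incl_prob_ge0 C (s_strategy m) b_le_n x).
rewrite survival_probE // alphaE -batch_probE // lerD2l lerN2.
apply: (@prod_pair_le_expr _ _ J (fun m => 1 - batch_prob C n (s m) b x)) => m.
exact: sum_event_compl_itv (pair_pmf_ge0 C (s_strategy m) b_le_n) (pair_sum1 m) _.
Qed.
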